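(* Let $k$ be a field of characteristic different from $2$ and $3$, and let $\mathcal{H}$ be a K-Hopf loop over $k$ (defined in the context), with product $\cdot$, unit $1$, coproduct $\Delta a=a_{(1)}\otimes a_{(2)}$ (Sweedler notation), counit $\epsilon$ and antipode $S$. Then for all $a,b\in\mathcal{H}$: $$a_{(1)}\cdot(a_{(2)}\cdot b)=(a_{(1)}\cdot a_{(2)})\cdot b,$$ $$S(a_{(1)})\cdot a_{(2)}=a_{(1)}\cdot S(a_{(2)}).$$
   Context: A K-Hopf loop over a field $k$ (of characteristic $\neq 2,3$) is a unital (not necessarily associative) algebra $\mathcal{H}$ with product $\cdot$ and unit $1$, equipped with algebra homomorphisms $\Delta:\mathcal{H}\to\mathcal{H}\otimes\mathcal{H}$ and $\epsilon:\mathcal{H}\to k$ making $\mathcal{H}$ a coassociative counital coalgebra, and a linear map $S:\mathcal{H}\to\mathcal{H}$, such that, writing $\Delta a=a_{(1)}\otimes a_{(2)}$, for all $a,b,c\in\mathcal{H}$: (i) $a_{(1)}\cdot(b\cdot(a_{(2)}\cdot c))=(a_{(1)}\cdot(b\cdot a_{(2)}))\cdot c$; (ii) $a_{(1)}\cdot(S(a_{(2)})\cdot b)=\epsilon(a)\,b=S(a_{(1)})\cdot(a_{(2)}\cdot b)$; (iii) $S(a\cdot b)=S(a)\cdot S(b)$; (iv) $\Delta(S(a))=S(a_{(1)})\otimes S(a_{(2)})$. *)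

From HB Require Import structures.
From mathcomp Require Import all_boot all_order all_algebra.
Set Implicit Arguments. Unset Strict Implicit. Unset Printing Implicit Defensive.
Import GRing.Theory.
Local Open Scope ring_scope.

(* An element of H (x) H is represented by a finite list
   of pairs s = [:: (x_1,y_1); ...] standing for sum_i x_i (x) y_i.  Two such
   representatives denote the same tensor iff every bilinear form H x H -> k
   takes the same value on them (linear functionals on H(x)H = bilinear forms,
   and they separate points of the tensor product). *)

Definition linear_fun (k : fieldType) (H : lmodType k) (V : lmodType k)
  (f : H -> V) : Prop :=
  forall (c : k) (x y : H), f (c *: x + y) = c *: f x + f y.

Definition bilinear_fun (k : fieldType) (H : lmodType k) (V : lmodType k)
  (f : H -> H -> V) : Prop :=
  (forall z, linear_fun (fun x => f x z)) /\ (forall z, linear_fun (f z)).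

Definition trilinear_fun (k : fieldType) (H : lmodType k) (V : lmodType k)
  (f : H -> H -> H -> V) : Prop :=
  (forall y z, linear_fun (fun x => f x y z)) /\
  (forall x z, linear_fun (fun y => f x y z)) /\
  (forall x y, linear_fun (f x y)).

Definition teq2 (k : fieldType) (H : lmodType k) (s t : seq (H * H)) : Prop :=
  forall f : H -> H -> k^o, bilinear_fun f ->
    \sum_(p <- s) f p.1 p.2 = \sum_(p <- t) f p.1 p.2.

Definition teq3 (k : fieldType) (H : lmodType k) (s t : seq (H * H * H)) : Prop :=
  forall f : H -> H -> H -> k^o, trilinear_fun f ->
    \sum_(p <- s) f p.1.1 p.1.2 p.2 = \sum_(p <- t) f p.1.1 p.1.2 p.2.

Definition is_KHopf_loop (k : fieldType) (H : lmodType k)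
  (mul : H -> H -> H) (one : H) (Delta : H -> seq (H * H)) (eps : H -> k^o)
  (S : H -> H) : Prop :=
  (* unital (not necessarily associative) algebra *)
  bilinear_fun mul /\
  (forall x, mul one x = x) /\ (forall x, mul x one = x) /\
  (forall (c : k) a b,
     teq2 (Delta (c *: a + b)) ([seq (c *: p.1, p.2) | p <- Delta a] ++ Delta b)) /\
  (forall a b, teq2 (Delta (mul a b))
                    [seq (mul p.1 q.1, mul p.2 q.2) | p <- Delta a, q <- Delta b]) /\
  teq2 (Delta one) [:: (one, one)] /\
  linear_fun eps /\
  (forall a b, eps (mul a b) = eps a * eps b) /\ eps one = 1 /\
  (forall a, teq3
     [seq (q.1, q.2, p.2) | p <- Delta a, q <- Delta p.1]
     [seq (p.1, q.1, q.2) | p <- Delta a, q <- Delta p.2]) /\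
  (forall a, \sum_(p <- Delta a) (eps p.1 *: p.2) = a) /\
  (forall a, \sum_(p <- Delta a) (eps p.2 *: p.1) = a) /\
  linear_fun S /\
  (* (i) *)
  (forall a b c, \sum_(p <- Delta a) mul p.1 (mul b (mul p.2 c))
               = \sum_(p <- Delta a) mul (mul p.1 (mul b p.2)) c) /\
  (* (ii) *)
  (forall a b, \sum_(p <- Delta a) mul p.1 (mul (S p.2) b) = eps a *: b) /\
  (forall a b, \sum_(p <- Delta a) mul (S p.1) (mul p.2 b) = eps a *: b) /\
  (forall a b, S (mul a b) = mul (S a) (S b)) /\
  (forall a, teq2 (Delta (S a)) [seq (S p.1, S p.2) | p <- Delta a]).

From HB Require Import structures.
From mathcomp Require Import all_boot all_order all_algebra.
Import GRing.Theory.
Local Open Scope ring_scope.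
Set Implicit Arguments.
Unset Strict Implicit.

(* Both identities are axioms (i) and (ii) specialised at the unit: with
   [b := 1] in (i), resp. [b := 1] in the two halves of (ii), after which
   both sides of the antipode identity equal [eps a *: 1]. *)

Section UnitSpecialisation.

Variables (k : fieldType) (H : lmodType k).
Variables (mul : H -> H -> H) (one : H) (Delta : H -> seq (H * H)).

Lemma sum_mul_assoc_of_left_Bol_unit :
  (forall x, mul one x = x) ->
  (forall a b c, \sum_(p <- Delta a) mul p.1 (mul b (mul p.2 c))
               = \sum_(p <- Delta a) mul (mul p.1 (mul b p.2)) c) ->
  forall a c, \sum_(p <- Delta a) mul p.1 (mul p.2 c)
            = \sum_(p <- Delta a) mul (mul p.1 p.2) c.
Proof.
move=> mul1x bol a c; have := bol a one c.
by under eq_bigr do rewrite mul1x; under [in X in _ = X -> _]eq_bigr do rewrite mul1x.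
Qed.

Variables (eps : H -> k^o) (S : H -> H).

Lemma antipode_sum_mul_comm :
  (forall x, mul x one = x) ->
  (forall a b, \sum_(p <- Delta a) mul p.1 (mul (S p.2) b) = eps a *: b) ->
  (forall a b, \sum_(p <- Delta a) mul (S p.1) (mul p.2 b) = eps a *: b) ->
  forall a, \sum_(p <- Delta a) mul (S p.1) p.2
          = \sum_(p <- Delta a) mul p.1 (S p.2).
Proof.
move=> mulx1 antipodeR antipodeL a.
have := antipodeL a one; under eq_bigr do rewrite mulx1; move->.
have := antipodeR a one; under eq_bigr do rewrite mulx1; by move->.
Qed.

End UnitSpecialisation.

Theorem proposition3p2 (k : fieldType) (H : lmodType k)
  (mul : H -> H -> H) (one : H) (Delta : H -> seq (H * H)) (eps : H -> k^o)
  (S : H -> H) :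
  (2 \notin [pchar k])%N -> (3 \notin [pchar k])%N ->
  is_KHopf_loop mul one Delta eps S ->
  (forall a b : H, \sum_(p <- Delta a) mul p.1 (mul p.2 b)
                 = \sum_(p <- Delta a) mul (mul p.1 p.2) b) /\
  (forall a : H, \sum_(p <- Delta a) mul (S p.1) p.2
               = \sum_(p <- Delta a) mul p.1 (S p.2)).
Proof.
move=> _ _ [_ [mul1x [mulx1 [_ [_ [_ [_ [_ [_ [_ [_ [_ [_
  [bol [antipodeR [antipodeL _]]]]]]]]]]]]]]]].
split.
- exact: sum_mul_assoc_of_left_Bol_unit mul1x bol.
- exact: (antipode_sum_mul_comm (S := S) mulx1 antipodeR antipodeL).
Qed.
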